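(* Let $a,b\in\mathbb{B}^2$ with $a\neq b$, and let $m=d(\{0\},L[a,b])$ be the Euclidean distance from the origin to the line $L[a,b]$ through $a$ and $b$. Then $$\tan\frac{v_{\mathbb{B}^2}(a,b)}{2}=\frac{\sqrt{1+m}}{\sqrt{1-m}}\,\operatorname{th}\frac{h_{\mathbb{B}^2}(a,b)}{4}.$$
   Context: $\mathbb{B}^2$ is the open unit disk in $\mathbb{C}$ and $\operatorname{th}$ is the hyperbolic tangent. For distinct $a,b\in\mathbb{B}^2$ the Hilbert metric is $h_{\mathbb{B}^2}(a,b)=\log\frac{|u-b||a-v|}{|u-a||b-v|}$, where $u,v$ are the two intersection points of the line $L[a,b]$ with the unit circle, labelled so that $|u-a|<|u-b|$; also $h_{\mathbb{B}^2}(a,a)=0$. The visual angle metric is $v_{\mathbb{B}^2}(a,b)=\sup\{\measuredangle(a,z,b): z\in\partial\mathbb{B}^2\}$, where $\measuredangle(a,z,b)$ is the angle at $z$ between the segments $[z,a]$ and $[z,b]$. *)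

From Stdlib Require Import Reals.
From Coquelicot Require Import Coquelicot.
Open Scope R_scope.

Definition pt := (R * R)%type.
Definition psub (p q : pt) : pt := (fst p - fst q, snd p - snd q).
Definition dot (p q : pt) : R := fst p * fst q + snd p * snd q.
Definition enorm (p : pt) : R := sqrt (dot p p).
Definition edist (p q : pt) : R := enorm (psub p q).

Definition in_disk (p : pt) : Prop := enorm p < 1.
Definition on_circle (p : pt) : Prop := enorm p = 1.

Definition on_line (a b p : pt) : Prop :=
  exists t : R, p = (fst a + t * (fst b - fst a), snd a + t * (snd b - snd a)).

Definition th (x : R) : R := (exp x - exp (- x)) / (exp x + exp (- x)).

Definition angle (a z b : pt) : R :=
  acos (dot (psub a z) (psub b z) / (enorm (psub a z) * enorm (psub b z))).

Definition visual_angle (a b : pt) : R :=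
  real (Lub_Rbar (fun r => exists z, on_circle z /\ r = angle a z b)).

Definition dist0_line (a b : pt) : R :=
  real (Glb_Rbar (fun r => exists p, on_line a b p /\ r = enorm p)).

(* Hilbert metric of the disk: u, v are the two intersection points of
   L[a,b] with the unit circle, labelled so that |u-a| < |u-b|. *)
Definition hilbert_endpoints (a b u v : pt) : Prop :=
  on_line a b u /\ on_line a b v /\ on_circle u /\ on_circle v /\ u <> v /\
  edist u a < edist u b.

Definition hilbert_formula (a b u v : pt) : R :=
  ln ((edist u b * edist a v) / (edist u a * edist b v)).

From Stdlib Require Import Reals Lra Psatz.
From Coquelicot Require Import Coquelicot.
Open Scope R_scope.

(* Rotate the plane so that L[a,b] is the line y = m >= 0, meeting the unit
   circle at (-l,m) and (l,m), with a = (A,m) and b = (B,m).  The circle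
   through a and b that is internally tangent to the unit circle on the far
   side of the chord contains, together with its mirror image in the chord, no
   point of the unit circle in its interior; so by the inscribed angle theorem
   the angle a z b over z on the unit circle is maximal at the point of
   tangency.  Computing that angle, tan (v/2) = (1+m)/l * (P-Q)/(P+Q) where
   P^2 = |u-b||a-v| and Q^2 = |u-a||b-v|; finally (1+m)/l = sqrt(1+m)/sqrt(1-m)
   and (P-Q)/(P+Q) = th (h/4) since e^h = P^2/Q^2. *)

Lemma cos_2atan (T : R) : cos (2 * atan T) = (1 - T^2) / (1 + T^2).
Proof.
  rewrite cos_2a_cos, cos_atan.
  set (s := sqrt (1 + T²)).
  assert (Hs : s * s = 1 + T^2) by (unfold s; rewrite sqrt_sqrt; unfold Rsqr; nra).
  assert (0 < s) by (unfold s; apply sqrt_lt_R0; unfold Rsqr; nra).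
  replace (1 - T^2) with (2 - s * s) by lra. rewrite <- Hs. field. lra.
Qed.

Lemma two_atan_bound (T : R) : 0 < T -> 0 < 2 * atan T < PI.
Proof.
  intros HT. pose proof (atan_bound T). pose proof (atan_increasing 0 T HT).
  rewrite atan_0 in *. lra.
Qed.

Lemma acos_le_of_cos_le (x y : R) : -1 <= x <= 1 -> 0 <= y <= PI -> cos y <= x -> acos x <= y.
Proof.
  intros Hx Hy Hc. destruct (Rle_or_lt (acos x) y) as [|Hlt]; auto.
  pose proof (acos_bound x).
  assert (cos (acos x) < cos y) by (apply cos_decreasing_1; lra).
  rewrite cos_acos in * by lra. lra.
Qed.

(* [D/N] and [X/N] are the cosine and sine of an angle in [[0, PI]]; the
   hypothesis compares its cotangent [D/X] with [cot (2 atan T) = (1-T^2)/(2T)],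
   the conclusion compares its cosine with [cos (2 atan T) = (1-T^2)/(1+T^2)]. *)
Lemma cos_le_of_cot_le (T D X N : R) : 0 < T -> 0 <= N -> 0 <= X -> N*N = D*D + X*X ->
  (1 - T^2) * X <= 2 * T * D -> (1 - T^2) * N <= (1 + T^2) * D.
Proof.
  intros HT HN HX HN2 HD.
  assert (Hsq : ((1 + T^2) * D)² - ((1 - T^2) * N)²
                = (2*T*D - (1 - T^2)*X) * (2*T*D + (1 - T^2)*X)).
  { unfold Rsqr. replace ((1 - T^2) * N * ((1 - T^2) * N)) with ((1 - T^2)^2 * (N*N)) by ring.
    rewrite HN2. ring. }
  assert (HT2 : 0 <= T^2) by nra.
  destruct (Rle_or_lt 0 (1 - T^2)) as [Hc | Hc].
  - assert (0 <= (1 - T^2) * X) by (apply Rmult_le_pos; lra).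
    assert (0 <= D) by nra.
    apply Rsqr_incr_0_var; [|apply Rmult_le_pos; lra].
    assert (0 <= (2*T*D - (1 - T^2)*X) * (2*T*D + (1 - T^2)*X)) by (apply Rmult_le_pos; lra).
    lra.
  - destruct (Rle_or_lt 0 D) as [HD0 | HD0].
    + nra.
    + enough (- ((1 + T^2) * D) <= - ((1 - T^2) * N)) by lra.
      apply Rsqr_incr_0_var; rewrite <- ?Rsqr_neg; [|nra].
      assert ((1 - T^2) * X <= 0) by nra.
      assert (2 * T * D < 0) by nra.
      assert (0 <= 2*T*D - (1 - T^2)*X) by lra.
      assert ((2*T*D - (1 - T^2)*X) * (2*T*D + (1 - T^2)*X) <= 0) by nra. lra.
Qed.

Lemma acos_le_2atan (T D X N : R) : 0 < T -> 0 < N -> 0 <= X -> N*N = D*D + X*X ->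
  (1 - T^2) * X <= 2 * T * D -> acos (D / N) <= 2 * atan T.
Proof.
  intros HT HN HX HN2 HD.
  pose proof (cos_le_of_cot_le T D X N HT (Rlt_le _ _ HN) HX HN2 HD) as Hcos.
  assert (HDN : D*D <= N*N) by nra.
  apply acos_le_of_cos_le.
  - split; apply (Rmult_le_reg_r N); auto; unfold Rdiv; rewrite Rmult_assoc, Rinv_l by lra; nra.
  - pose proof (two_atan_bound T HT). lra.
  - rewrite cos_2atan. assert (0 <= T^2) by nra.
    apply (Rmult_le_reg_r ((1 + T^2) * N)); [nra|].
    replace ((1 - T^2) / (1 + T^2) * ((1 + T^2) * N)) with ((1 - T^2) * N) by (field; lra).
    replace (D / N * ((1 + T^2) * N)) with ((1 + T^2) * D) by (field; lra). exact Hcos.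
Qed.

(* This is [acos_le_2atan] for the supplementary angle:
   [D -> -D] turns [acos (D/N)] into [PI - acos (D/N)], and [T -> 1/T] turns
   [2 atan T] into [PI - 2 atan T]. *)
Lemma acos_ge_2atan (T D X N : R) : 0 < T -> 0 < N -> 0 <= X -> N*N = D*D + X*X ->
  2 * T * D <= (1 - T^2) * X -> 2 * atan T <= acos (D / N).
Proof.
  intros HT HN HX HN2 HD.
  assert (Hsupp : acos (- D / N) <= 2 * atan (/ T)).
  { apply (acos_le_2atan _ _ X); [apply Rinv_0_lt_compat; lra | auto | auto | lra |].
    apply (Rmult_le_reg_r (T^2)); [nra|].
    replace ((1 - (/ T)^2) * X * T^2) with ((T^2 - 1) * X) by (field; lra).
    replace (2 * / T * - D * T^2) with (- (2 * T * D)) by (field; lra). lra. }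
  rewrite atan_inv, Rdiv_opp_l, acos_opp in Hsupp by lra. lra.
Qed.

Lemma th_ln_sq_ratio (P Q : R) : 0 < P -> 0 < Q -> th (ln (P*P / (Q*Q)) / 4) = (P - Q) / (P + Q).
Proof.
  intros HP HQ.
  assert (Hr : 0 < P/Q) by (apply Rdiv_lt_0_compat; auto).
  replace (P*P / (Q*Q)) with ((P/Q) * (P/Q)) by (field; lra).
  rewrite ln_mult by auto.
  set (y := (ln (P/Q) + ln (P/Q)) / 4).
  assert (Hy : exp y * exp y = P/Q).
  { rewrite <- exp_plus. replace (y + y) with (ln (P/Q)) by (unfold y; field). apply exp_ln; auto. }
  pose proof (exp_pos y).
  unfold th. rewrite exp_Ropp.
  replace ((exp y - / exp y) / (exp y + / exp y)) with ((exp y * exp y - 1) / (exp y * exp y + 1))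
    by (field; split; nra).
  rewrite Hy. field. lra.
Qed.

Lemma sqrt_ratio_1pm (l m : R) : 0 <= m -> 0 < l -> l*l + m*m = 1 ->
  sqrt (1 + m) / sqrt (1 - m) = (1 + m) / l.
Proof.
  intros Hm Hl Hlm.
  assert (m < 1) by nra.
  assert (Hs : l = sqrt (1 - m) * sqrt (1 + m)).
  { rewrite <- sqrt_mult by lra. replace ((1 - m) * (1 + m)) with (l*l) by lra.
    rewrite sqrt_square; lra. }
  assert (0 < sqrt (1 - m)) by (apply sqrt_lt_R0; lra).
  assert (0 < sqrt (1 + m)) by (apply sqrt_lt_R0; lra).
  rewrite Hs. rewrite <- (sqrt_sqrt (1 + m)) at 2 by lra. field. lra.
Qed.

Definition cross (p q : pt) : R := fst p * snd q - snd p * fst q.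

Lemma dot_self_ge0 (p : pt) : 0 <= dot p p.
Proof. unfold dot. nra. Qed.

Lemma enorm_sq (p : pt) : enorm p * enorm p = dot p p.
Proof. apply sqrt_sqrt, dot_self_ge0. Qed.

Lemma on_circle_dot (p : pt) : on_circle p -> dot p p = 1.
Proof. unfold on_circle; intros Hp. rewrite <- enorm_sq, Hp. ring. Qed.

Lemma in_disk_dot (p : pt) : in_disk p -> dot p p < 1.
Proof. unfold in_disk, enorm; intros Hp. apply sqrt_lt_0_alt. now rewrite sqrt_1. Qed.

Lemma enorm_psub_pos (a z : pt) : a <> z -> 0 < enorm (psub a z).
Proof.
  intros Haz. apply sqrt_lt_R0.
  destruct (Rle_or_lt (dot (psub a z) (psub a z)) 0) as [Hle|]; auto.
  destruct (Rplus_sqr_eq_0 (fst a - fst z) (snd a - snd z)) as [H1 H2].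
  { pose proof (dot_self_ge0 (psub a z)). unfold dot, psub, Rsqr in *; simpl in *. lra. }
  destruct a, z; simpl in *. exfalso. apply Haz. f_equal; lra.
Qed.

Lemma lagrange_identity (p q : pt) :
  (enorm p * enorm q) * (enorm p * enorm q) = dot p q * dot p q + Rabs (cross p q) * Rabs (cross p q).
Proof.
  replace ((enorm p * enorm q) * (enorm p * enorm q)) with ((enorm p * enorm p) * (enorm q * enorm q)) by ring.
  rewrite !enorm_sq, <- Rabs_mult, Rabs_pos_eq by nra.
  unfold dot, cross. ring.
Qed.

Lemma angle_le_2atan (a z b : pt) (T : R) : 0 < T -> a <> z -> b <> z ->
  (1 - T^2) * Rabs (cross (psub a z) (psub b z)) <= 2 * T * dot (psub a z) (psub b z) ->
  angle a z b <= 2 * atan T.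
Proof.
  intros HT Ha Hb H. unfold angle.
  apply (acos_le_2atan T _ (Rabs (cross (psub a z) (psub b z))));
    auto using Rabs_pos, lagrange_identity.
  apply Rmult_lt_0_compat; auto using enorm_psub_pos.
Qed.

Lemma angle_eq_2atan (a z b : pt) (T : R) : 0 < T -> a <> z -> b <> z ->
  (1 - T^2) * Rabs (cross (psub a z) (psub b z)) = 2 * T * dot (psub a z) (psub b z) ->
  angle a z b = 2 * atan T.
Proof.
  intros HT Ha Hb H.
  assert (0 < enorm (psub a z) * enorm (psub b z)) by (apply Rmult_lt_0_compat; auto using enorm_psub_pos).
  apply Rle_antisym; [apply angle_le_2atan; auto; lra|].
  unfold angle. apply (acos_ge_2atan T _ (Rabs (cross (psub a z) (psub b z))));
    auto using Rabs_pos, lagrange_identity; lra.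
Qed.

Lemma visual_angle_eq (a b : pt) (theta : R) :
  (forall z, on_circle z -> angle a z b <= theta) ->
  (exists z, on_circle z /\ angle a z b = theta) -> visual_angle a b = theta.
Proof.
  intros Hle [z0 [Hz0 Heq]]. unfold visual_angle.
  rewrite (is_lub_Rbar_unique _ (Finite theta)); [reflexivity|]. split.
  - intros r [z [Hz ->]]. apply Hle; auto.
  - intros c Hc. apply Hc. exists z0. auto.
Qed.

Lemma dist0_line_eq (a b : pt) (d : R) :
  (forall p, on_line a b p -> d <= enorm p) ->
  (exists p, on_line a b p /\ enorm p = d) -> dist0_line a b = d.
Proof.
  intros Hle [p0 [Hp0 Heq]]. unfold dist0_line.
  rewrite (is_glb_Rbar_unique _ (Finite d)); [reflexivity|]. split.
  - intros r [p [Hp ->]]. apply Hle; auto.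
  - intros c Hc. apply Hc. exists p0. auto.
Qed.

(* The circle [(x-A)(x-B) + (y-m)^2 = g (y-m)] passes through [(A,m)] and
   [(B,m)] and has centre [w/2] with [w = (A+B, 2m+g)]; the choice of [g] makes
   [|w| = rho := AB + m^2 + 1 + gm], which is the condition for the circle to be
   internally tangent to the unit circle. *)
Definition tangent_offset (A B m l k : R) : R := (k - m * (l*l - A*B)) / (l*l).

Section TangentCircle.
Variables A B m l k : R.
Hypotheses (Hl : 0 < l) (Hm : 0 <= m) (Hlm : l*l + m*m = 1)
  (HA : -l < A < l) (HB : -l < B < l)
  (Hk : 0 <= k) (Hk2 : k*k = (l*l - A*A) * (l*l - B*B)).

Local Notation g := (tangent_offset A B m l k).
Local Notation rho := (A*B + m*m + 1 + g*m).

Lemma tangent_rho_sq : rho^2 = (A+B)^2 + (2*m + g)^2.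
Proof.
  assert (E : rho^2 - ((A+B)^2 + (2*m + g)^2) = ((l*l - A*A) * (l*l - B*B) - k*k) / (l*l)).
  { unfold tangent_offset. replace (l*l) with (1 - m*m) by lra. field. nra. }
  rewrite Hk2 in E. replace (((l*l - A*A) * (l*l - B*B) - (l*l - A*A) * (l*l - B*B)) / (l*l))
    with 0 in E by (field; lra). lra.
Qed.

Lemma tangent_AB_lt : A*B < l*l.
Proof. assert (A*A < l*l) by nra. assert (B*B < l*l) by nra. nra. Qed.

Lemma tangent_k_le : k <= l*l - A*B.
Proof.
  pose proof tangent_AB_lt.
  apply Rsqr_incr_0_var; [|lra].
  assert (Hk2' : k² = (l*l - A*B)² - l*l*(B-A)²) by (unfold Rsqr; rewrite Hk2; ring).
  rewrite Hk2'. unfold Rsqr.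
  assert (0 <= l*l * ((B-A) * (B-A))) by (apply Rmult_le_pos; apply Rle_0_sqr). lra.
Qed.

Lemma tangent_rho_range : 0 < rho <= 2.
Proof.
  pose proof tangent_k_le. pose proof tangent_AB_lt.
  assert (E : rho = (2*(l*l) + m*k - (l*l - A*B)) / (l*l)).
  { assert (E0 : rho - (2*(l*l) + m*k - (l*l - A*B)) / (l*l) = A*B*(l*l + m*m - 1) / (l*l))
      by (unfold tangent_offset; field; nra).
    rewrite Hlm in E0. replace (A*B*(1 - 1) / (l*l)) with 0 in E0 by (field; nra). lra. }
  assert (0 < l*l) by nra.
  assert (m <= 1) by nra.
  rewrite E. split.
  - apply Rdiv_lt_0_compat; nra.
  - apply Rmult_le_reg_r with (l*l); auto.
    unfold Rdiv. rewrite Rmult_assoc, Rinv_l by lra. nra.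
Qed.

(* With [r = |p| >= 1], Cauchy-Schwarz and [|w| = rho <= 2] give
   [r^2 - 1 + rho - w.p >= (r-1)(r+1-rho) >= 0]. *)
Lemma tangent_circle_inside (x y : R) :
  1 <= x*x + y*y -> 0 <= (A-x)*(B-x) + (y-m)^2 - g*(y-m).
Proof.
  intros Hr. pose proof tangent_rho_sq as Ht. pose proof tangent_rho_range as [Hrho0 Hrho2].
  set (r := sqrt (x*x + y*y)).
  assert (Hr2 : r*r = x*x + y*y) by (apply sqrt_sqrt; lra).
  assert (Hr1 : 1 <= r) by (rewrite <- sqrt_1; apply sqrt_le_1_alt; lra).
  set (V := (A+B)*x + (2*m + g)*y).
  assert (HV : V <= rho * r).
  { apply Rsqr_incr_0_var; [|nra].
    assert (0 <= ((A+B)*y - (2*m + g)*x)^2) by apply pow2_ge_0.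
    unfold Rsqr, V. replace (rho * r * (rho * r)) with (rho^2 * (r*r)) by ring.
    rewrite Ht, Hr2. nra. }
  replace ((A-x)*(B-x) + (y-m)^2 - g*(y-m)) with (r*r - 1 + rho - V)
    by (rewrite Hr2; unfold V; ring).
  nra.
Qed.

(* For [y < m] apply the previous lemma to the mirror image [(x, 2m-y)] of
   [(x,y)] in the chord, which lies farther from the origin. *)
Lemma circle_chord_bound (x y : R) :
  x*x + y*y = 1 -> g * Rabs (m - y) <= (A-x)*(B-x) + (m-y)^2.
Proof.
  intros Hxy. destruct (Rle_or_lt m y) as [Hy|Hy].
  - rewrite Rabs_left1 by lra. pose proof (tangent_circle_inside x y ltac:(lra)). nra.
  - rewrite Rabs_right by lra. pose proof (tangent_circle_inside x (2*m - y) ltac:(nra)). nra.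
Qed.

Lemma circle_chord_bound_attained :
  exists x y, x*x + y*y = 1 /\ g * Rabs (m - y) = (A-x)*(B-x) + (m-y)^2.
Proof.
  pose proof tangent_rho_sq as Ht. pose proof tangent_rho_range as [Hrho0 Hrho2].
  exists ((A+B)/rho), ((2*m + g)/rho).
  assert (Hn : ((A+B)/rho) * ((A+B)/rho) + ((2*m + g)/rho) * ((2*m + g)/rho) = 1).
  { replace (((A+B)/rho) * ((A+B)/rho) + ((2*m + g)/rho) * ((2*m + g)/rho))
      with (((A+B)^2 + (2*m + g)^2) / rho^2) by (field; lra).
    rewrite <- Ht. field. lra. }
  split; auto.
  assert (Hy : m * rho <= 2*m + g).
  { assert (E : 2*m + g - m*rho = k).
    { assert (E0 : 2*m + g - m*rho - k = (1 - m*m - l*l) * (m + g))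
        by (unfold tangent_offset; field; nra).
      replace (1 - m*m - l*l) with 0 in E0 by lra. lra. }
    lra. }
  assert (Hy2 : m <= (2*m + g)/rho).
  { apply Rmult_le_reg_r with rho; auto. unfold Rdiv. rewrite Rmult_assoc, Rinv_l by lra. lra. }
  rewrite Rabs_left1 by lra.
  set (x := (A+B)/rho) in *. set (y := (2*m + g)/rho) in *.
  assert (E : (A-x)*(B-x) + (m-y)^2 + g*(m-y) = (x*x + y*y) - 1 + rho - ((A+B)^2 + (2*m+g)^2)/rho).
  { unfold x, y. field. lra. }
  rewrite Hn, <- Ht in E. replace (1 - 1 + rho - rho^2/rho) with 0 in E by (field; lra). lra.
Qed.

End TangentCircle.

(* For the chord from [u = (-l,m)] to [v = (l,m)] through [a = (A,m)] and
   [b = (B,m)]: [P^2 = |u-b| |a-v|] and [Q^2 = |u-a| |b-v|]. *)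
Definition chord_P (l A B : R) : R := sqrt ((l+B) * (l-A)).
Definition chord_Q (l A B : R) : R := sqrt ((l+A) * (l-B)).
Definition chord_T (l m A B : R) : R :=
  (1+m) * (chord_P l A B - chord_Q l A B) / (l * (chord_P l A B + chord_Q l A B)).

Section Chord.
Variables l m A B : R.
Hypotheses (Hl : 0 < l) (Hm : 0 <= m) (Hlm : l*l + m*m = 1)
  (HA : -l < A) (HAB : A < B) (HB : B < l).

Local Notation P := (chord_P l A B).
Local Notation Q := (chord_Q l A B).
Local Notation T := (chord_T l m A B).

Lemma chord_PQ : 0 < P /\ 0 < Q /\ P*P = (l+B)*(l-A) /\ Q*Q = (l+A)*(l-B) /\ Q < P.
Proof.
  assert (0 < (l+B)*(l-A)) by nra. assert (0 < (l+A)*(l-B)) by nra.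
  unfold chord_P, chord_Q. repeat split.
  - apply sqrt_lt_R0; auto.
  - apply sqrt_lt_R0; auto.
  - apply sqrt_sqrt; lra.
  - apply sqrt_sqrt; lra.
  - apply sqrt_lt_1; nra.
Qed.

Lemma chord_T_pos : 0 < T.
Proof. pose proof chord_PQ. unfold chord_T. apply Rdiv_lt_0_compat; nra. Qed.

Lemma chord_cot_rel : (1 - T^2) * (B - A) = 2 * T * tangent_offset A B m l (P*Q).
Proof.
  destruct chord_PQ as [HP [HQ [HP2 [HQ2 HPQ]]]].
  set (S := P*Q - m*((P*P + Q*Q)/2)).
  assert (Hkey : l*l*(P+Q)^2 - (1+m)^2*(P-Q)^2 = 4*(1+m)*S)
    by (unfold S; replace (l*l) with ((1-m)*(1+m)) by lra; field).
  replace (1 - T^2) with ((l*l*(P+Q)^2 - (1+m)^2*(P-Q)^2) / (l*l*(P+Q)^2))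
    by (unfold chord_T; field; lra).
  rewrite Hkey.
  replace (B - A) with ((P*P - Q*Q) / (2*l)) by (rewrite HP2, HQ2; field; lra).
  replace (tangent_offset A B m l (P*Q)) with (S / (l*l))
    by (unfold tangent_offset, S; rewrite HP2, HQ2; field; lra).
  unfold chord_T. field. lra.
Qed.

Lemma chord_angle_cross_dot (x y : R) :
  Rabs (cross (psub (A,m) (x,y)) (psub (B,m) (x,y))) = (B - A) * Rabs (m - y) /\
  dot (psub (A,m) (x,y)) (psub (B,m) (x,y)) = (A-x)*(B-x) + (m-y)^2.
Proof.
  unfold cross, dot, psub; simpl. split; [|ring].
  replace ((A - x) * (m - y) - (m - y) * (B - x)) with (- ((B - A) * (m - y))) by ring.
  rewrite Rabs_Ropp, Rabs_mult, Rabs_pos_eq by lra. reflexivity.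
Qed.

Lemma chord_pt_neq (C x y : R) : -l < C < l -> x*x + y*y = 1 -> (C, m) <> (x, y).
Proof. intros HC Hxy Heq. injection Heq as -> ->. nra. Qed.

Lemma chord_k : 0 <= P*Q /\ (P*Q)*(P*Q) = (l*l - A*A) * (l*l - B*B).
Proof.
  destruct chord_PQ as [HP [HQ [HP2 [HQ2 _]]]]. split; [nra|].
  replace ((P*Q)*(P*Q)) with ((P*P)*(Q*Q)) by ring. rewrite HP2, HQ2. ring.
Qed.

Lemma chord_angle_le (z : pt) : on_circle z -> angle (A,m) z (B,m) <= 2 * atan T.
Proof.
  destruct z as [x y]. intros Hz. apply on_circle_dot in Hz. unfold dot in Hz; simpl in Hz.
  destruct chord_k as [Hk Hk2]. pose proof chord_T_pos.
  destruct (chord_angle_cross_dot x y) as [Hc Hd].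
  apply angle_le_2atan; [lra | apply chord_pt_neq; auto; lra | apply chord_pt_neq; auto; lra |].
  rewrite Hc, Hd, <- Rmult_assoc, chord_cot_rel.
  pose proof (circle_chord_bound A B m l (P*Q) Hl Hm Hlm ltac:(lra) ltac:(lra) Hk Hk2 x y Hz).
  rewrite Rmult_assoc. apply Rmult_le_compat_l; [lra|]. nra.
Qed.

Lemma chord_angle_attained : exists z, on_circle z /\ angle (A,m) z (B,m) = 2 * atan T.
Proof.
  destruct chord_k as [Hk Hk2]. pose proof chord_T_pos.
  destruct (circle_chord_bound_attained A B m l (P*Q) Hl Hm Hlm ltac:(lra) ltac:(lra) Hk Hk2)
    as [x [y [Hxy Heq]]].
  exists (x, y). split.
  - unfold on_circle, enorm, dot; simpl. rewrite Hxy. apply sqrt_1.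
  - destruct (chord_angle_cross_dot x y) as [Hc Hd].
    apply angle_eq_2atan; [lra | apply chord_pt_neq; auto; lra | apply chord_pt_neq; auto; lra |].
    rewrite Hc, Hd, <- Rmult_assoc, chord_cot_rel, <- Heq. ring.
Qed.

End Chord.

Definition line_point (u v : pt) (t : R) : pt :=
  (fst u + t * (fst v - fst u), snd u + t * (snd v - snd u)).

Lemma line_point_0 (u v : pt) : line_point u v 0 = u.
Proof. destruct u. unfold line_point; simpl. f_equal; ring. Qed.

Lemma line_point_1 (u v : pt) : line_point u v 1 = v.
Proof. destruct v. unfold line_point; simpl. f_equal; ring. Qed.

Lemma line_point_compose (u v : pt) (s t r : R) :
  line_point (line_point u v s) (line_point u v t) r = line_point u v (s + r * (t - s)).
Proof. unfold line_point; simpl. f_equal; ring. Qed.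

Lemma line_point_rebase (a b u v : pt) (t1 t2 : R) :
  u = line_point a b t1 -> v = line_point a b t2 -> u <> v ->
  a = line_point u v (- t1 / (t2 - t1)) /\ b = line_point u v ((1 - t1) / (t2 - t1)).
Proof.
  intros -> -> Huv.
  assert (t2 - t1 <> 0) by (intros H; apply Huv; replace t2 with t1 by lra; reflexivity).
  rewrite !line_point_compose. split.
  - replace (t1 + - t1 / (t2 - t1) * (t2 - t1)) with 0 by (field; auto).
    symmetry. apply line_point_0.
  - replace (t1 + (1 - t1) / (t2 - t1) * (t2 - t1)) with 1 by (field; auto).
    symmetry. apply line_point_1.
Qed.

Lemma edist_horizontal (x y m : R) : edist (x, m) (y, m) = Rabs (x - y).
Proof.
  unfold edist, enorm, dot, psub; simpl.
  replace ((x - y) * (x - y) + (m - m) * (m - m)) with ((x - y)²) by (unfold Rsqr; ring).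
  apply sqrt_Rsqr_abs.
Qed.

(* Coordinates in the orthonormal frame whose first axis is the direction of
   [v - u] and whose second axis is oriented so that the chord [[u,v]] lies on
   the line [y = m >= 0]. *)
Section Frame.
Variables u v : pt.
Hypotheses (Hu : on_circle u) (Hv : on_circle v) (Huv : u <> v).

Local Notation e := (psub v u).
Local Notation L := (enorm (psub v u)).

Definition frame_sign : R := if Rle_dec 0 (cross e u) then 1 else -1.
Local Notation sg := frame_sign.

Definition frame (p : pt) : pt := (dot p e / L, sg * cross e p / L).
Definition unframe (w : pt) : pt :=
  ((fst w * fst e - sg * snd w * snd e) / L, (fst w * snd e + sg * snd w * fst e) / L).
Definition frame_l : R := L / 2.
Definition frame_m : R := sg * cross e u / L.
Local Notation l := frame_l.
Local Notation m := frame_m.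
Local Notation lp := (line_point u v).

Lemma frame_sign_sq : sg * sg = 1.
Proof. unfold frame_sign. destruct Rle_dec; lra. Qed.

Lemma frame_L_pos : 0 < L.
Proof. apply enorm_psub_pos. auto. Qed.

Lemma frame_dot (p q : pt) : dot (frame p) (frame q) = dot p q.
Proof.
  pose proof frame_L_pos. pose proof (enorm_sq e) as HL. pose proof frame_sign_sq as Hsg.
  unfold frame, dot at 1; simpl.
  replace (dot p e / L * (dot q e / L) + sg * cross e p / L * (sg * cross e q / L))
    with ((dot p e * dot q e + (sg * sg) * (cross e p * cross e q)) / (L * L)) by (field; lra).
  rewrite HL, Hsg. unfold dot, cross. field.
  unfold dot in HL. nra.
Qed.

Lemma frame_psub (p q : pt) : frame (psub p q) = psub (frame p) (frame q).
Proof.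
  pose proof frame_L_pos. unfold frame. set (E := psub v u) in *.
  unfold psub, dot, cross; simpl. f_equal; field; lra.
Qed.

Lemma frame_enorm (p : pt) : enorm (frame p) = enorm p.
Proof. unfold enorm. now rewrite frame_dot. Qed.

Lemma frame_edist (p q : pt) : edist (frame p) (frame q) = edist p q.
Proof. unfold edist. now rewrite <- frame_psub, frame_enorm. Qed.

Lemma frame_angle (a z b : pt) : angle (frame a) (frame z) (frame b) = angle a z b.
Proof. unfold angle. now rewrite <- !frame_psub, !frame_dot, !frame_enorm. Qed.

Lemma frame_unframe (w : pt) : frame (unframe w) = w.
Proof.
  pose proof frame_L_pos. pose proof (enorm_sq e) as HL. pose proof frame_sign_sq as Hsg.
  unfold frame, unframe. set (E := psub v u) in *. set (L0 := enorm E) in *.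
  clearbody L0 E. destruct E as [e1 e2], w as [x y]. unfold dot, cross in *; simpl in *.
  f_equal.
  - transitivity (x * (e1 * e1 + e2 * e2) / (L0 * L0)); [field; lra|].
    rewrite <- HL. field. lra.
  - transitivity ((sg * sg) * y * (e1 * e1 + e2 * e2) / (L0 * L0)); [field; lra|].
    rewrite <- HL, Hsg. field. lra.
Qed.

Lemma frame_line_point (t : R) : frame (lp t) = (l * (2*t - 1), m).
Proof.
  pose proof frame_L_pos. pose proof (enorm_sq e) as HL.
  pose proof (on_circle_dot u Hu) as Hu1. pose proof (on_circle_dot v Hv) as Hv1.
  assert (Hd : dot (lp t) e = (t - 1/2) * dot e e)
    by (unfold dot, psub, line_point in *; simpl in *; lra).
  assert (Hc : cross e (lp t) = cross e u) by (unfold cross, psub, line_point; simpl; ring).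
  unfold frame, frame_l, frame_m. rewrite Hd, Hc, <- HL. f_equal. field. lra.
Qed.

Lemma frame_u : frame u = (- l, m).
Proof. rewrite <- (line_point_0 u v) at 1. rewrite frame_line_point. f_equal; ring. Qed.

Lemma frame_v : frame v = (l, m).
Proof. rewrite <- (line_point_1 u v) at 1. rewrite frame_line_point. f_equal; ring. Qed.

Lemma frame_l_pos : 0 < l.
Proof. pose proof frame_L_pos. unfold frame_l. lra. Qed.

Lemma frame_m_nonneg : 0 <= m.
Proof.
  pose proof frame_L_pos. unfold frame_m, frame_sign, Rdiv.
  apply Rmult_le_pos; [destruct Rle_dec; lra | left; apply Rinv_0_lt_compat; auto].
Qed.

Lemma frame_lm : l*l + m*m = 1.
Proof.
  rewrite <- (on_circle_dot u Hu), <- frame_dot, frame_u. unfold dot; simpl. ring.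
Qed.

Lemma frame_edist_u (t : R) : edist u (lp t) = 2 * l * Rabs t.
Proof.
  pose proof frame_l_pos.
  rewrite <- frame_edist, frame_u, frame_line_point, edist_horizontal.
  replace (- l - l * (2*t - 1)) with (- (2 * l) * t) by ring.
  rewrite Rabs_mult, Rabs_Ropp, Rabs_pos_eq by lra. reflexivity.
Qed.

Lemma frame_in_disk (t : R) : in_disk (lp t) -> 0 < t < 1.
Proof.
  intros Ht. apply in_disk_dot in Ht.
  rewrite <- frame_dot, frame_line_point in Ht. unfold dot in Ht; simpl in Ht.
  pose proof frame_lm. pose proof frame_l_pos. nra.
Qed.

Section FrameChord.
Variables al be : R.
Hypotheses (Hal : 0 < al) (Hab : al < be) (Hbe : be < 1).
Local Notation A := (l * (2*al - 1)).
Local Notation B := (l * (2*be - 1)).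

Lemma frame_chord_bounds : -l < A /\ A < B /\ B < l.
Proof. pose proof frame_l_pos. nra. Qed.

Lemma frame_visual_angle : visual_angle (lp al) (lp be) = 2 * atan (chord_T l m A B).
Proof.
  pose proof frame_l_pos. pose proof frame_m_nonneg. pose proof frame_lm.
  destruct frame_chord_bounds as [HA [HAB HB]].
  apply visual_angle_eq.
  - intros z Hz. rewrite <- frame_angle, !frame_line_point.
    apply chord_angle_le; auto. unfold on_circle. rewrite frame_enorm. exact Hz.
  - destruct (chord_angle_attained l m A B) as [w [Hw Hangle]]; auto.
    exists (unframe w). split.
    + unfold on_circle. rewrite <- frame_enorm, frame_unframe. exact Hw.
    + rewrite <- frame_angle, frame_unframe, !frame_line_point. exact Hangle.
Qed.

Lemma frame_dist0_line : dist0_line (lp al) (lp be) = m.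
Proof.
  pose proof frame_m_nonneg.
  apply dist0_line_eq.
  - intros p [t Hp]. fold (line_point (lp al) (lp be) t) in Hp.
    rewrite Hp, line_point_compose, <- frame_enorm, frame_line_point.
    unfold enorm, dot; simpl. rewrite <- (sqrt_square m) at 1 by auto.
    apply sqrt_le_1_alt.
    rewrite <- (Rplus_0_l (m * m)) at 1. apply Rplus_le_compat_r, Rle_0_sqr.
  - exists (lp (1/2)). split.
    + exists ((1/2 - al) / (be - al)). fold (line_point (lp al) (lp be) ((1/2 - al) / (be - al))).
      rewrite line_point_compose. f_equal. field. lra.
    + rewrite <- frame_enorm, frame_line_point. unfold enorm, dot; simpl.
      replace (l * (2 * (1/2) - 1) * (l * (2 * (1/2) - 1)) + m * m) with (m * m) by field.
      apply sqrt_square; auto.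
Qed.

Lemma frame_hilbert :
  hilbert_formula (lp al) (lp be) u v =
    ln (chord_P l A B * chord_P l A B / (chord_Q l A B * chord_Q l A B)).
Proof.
  pose proof frame_l_pos. pose proof frame_m_nonneg. pose proof frame_lm.
  destruct frame_chord_bounds as [HA [HAB HB]].
  destruct (chord_PQ l A B) as [_ [_ [HP2 [HQ2 _]]]]; auto.
  rewrite HP2, HQ2. unfold hilbert_formula.
  rewrite <- (frame_edist u (lp be)), <- (frame_edist (lp al) v), <- (frame_edist u (lp al)),
    <- (frame_edist (lp be) v), frame_u, frame_v, !frame_line_point, !edist_horizontal.
  rewrite !Rabs_left by lra. f_equal. field. split; lra.
Qed.

Lemma frame_chord_formula :
  tan (visual_angle (lp al) (lp be) / 2) =
    sqrt (1 + dist0_line (lp al) (lp be)) / sqrt (1 - dist0_line (lp al) (lp be))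
    * th (hilbert_formula (lp al) (lp be) u v / 4).
Proof.
  pose proof frame_l_pos. pose proof frame_m_nonneg. pose proof frame_lm.
  destruct frame_chord_bounds as [HA [HAB HB]].
  destruct (chord_PQ l A B) as [HP [HQ _]]; auto.
  rewrite frame_visual_angle, frame_dist0_line, frame_hilbert, (sqrt_ratio_1pm l m),
    th_ln_sq_ratio by auto.
  replace (2 * atan (chord_T l m A B) / 2) with (atan (chord_T l m A B)) by field.
  rewrite tan_atan. unfold chord_T. field. split; lra.
Qed.
End FrameChord.

Lemma frame_formula (al be : R) :
  in_disk (lp al) -> in_disk (lp be) -> edist u (lp al) < edist u (lp be) ->
  tan (visual_angle (lp al) (lp be) / 2) =
    sqrt (1 + dist0_line (lp al) (lp be)) / sqrt (1 - dist0_line (lp al) (lp be))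
    * th (hilbert_formula (lp al) (lp be) u v / 4).
Proof.
  intros Ha Hb Hab. pose proof frame_l_pos.
  apply frame_in_disk in Ha. apply frame_in_disk in Hb.
  rewrite !frame_edist_u, !Rabs_pos_eq in Hab by lra.
  apply frame_chord_formula; nra.
Qed.
End Frame.

Theorem theorem1p1 (a b u v : pt) :
  in_disk a -> in_disk b -> a <> b ->
  hilbert_endpoints a b u v ->
  tan (visual_angle a b / 2) =
    sqrt (1 + dist0_line a b) / sqrt (1 - dist0_line a b)
    * th (hilbert_formula a b u v / 4).
Proof.
  (* [a <> b] also follows from [|u - a| < |u - b|]. *)
  intros Ha Hb _ [[t1 Hu] [[t2 Hv] [Huc [Hvc [Huv Hua]]]]].
  destruct (line_point_rebase a b u v t1 t2 Hu Hv Huv) as [-> ->].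
  apply frame_formula; auto.
Qed.
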